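(* Let $M_G$ be a mixed graph of order $n$ such that $N(M_G)$ has rank $2$. Then $M_G$ is switching equivalent to the (undirected) graph $K_{a,b}\cup tK_1$ for some integers $a,b\ge1$, $t\ge0$.
   Context: A mixed graph $M_G$ is obtained from a finite simple graph $G$ by orienting the edges of some subset of $E(G)$. With $\omega=\frac{1+\mathbf{i}\sqrt3}{2}$, $N(M_G)$ has $(u,v)$-entry $\omega$ if $\overrightarrow{uv}$ is an arc, $\bar\omega$ if $\overrightarrow{vu}$ is an arc, $1$ for an undirected edge, $0$ otherwise. $\mathbb{T}_6=\{1,-1,\omega,\bar\omega,-\omega,-\bar\omega\}$. Given a partition $V(M_G)=\bigcup_{j\in\mathbb{T}_6}V_j$ into six possibly empty sets, an edge or arc $xy$ has type $(j,k)$ if $x\in V_j,y\in V_k$ (arcs directed from $x$ to $y$). The partition is admissible if every undirected edge has type $(j,j)$ or $(j,\omega j)$, and every arc has type $(j,j)$, $(j,\bar\omega j)$ or $(j,-\omega j)$, for some $j$. A three-way switching w.r.t. an admissible partition replaces each undirected edge of type $(j,\omega j)$ by an arc from $V_j$ to $V_{\omega j}$, replaces each arc of type $(j,\bar\omega j)$ by an undirected edge, and reverses each arc of type $(j,-\omega j)$. The converse of a mixed graph reverses all arcs. Two mixed graphs are switching equivalent if one is obtained from the other by a sequence of three-way switchings and taking converses. $K_{a,b}\cup tK_1$ is the complete bipartite graph $K_{a,b}$ together with $t$ isolated vertices. *)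

From HB Require Import structures.
From mathcomp Require Import all_boot all_order all_algebra all_field.
From Stdlib Require Import Relations.
Set Implicit Arguments. Unset Strict Implicit. Unset Printing Implicit Defensive.
Import Order.TTheory GRing.Theory Num.Theory.
Local Open Scope ring_scope.

(* Mixed graphs on vertex set 'I_n.  [g x y] describes the pair (x,y):
   NoE     : no edge between x and y
   UE      : undirected edge xy
   ArcTo   : arc from x to y
   ArcFrom : arc from y to x *)
Inductive medge := NoE | UE | ArcTo | ArcFrom.

Definition rev_medge (e : medge) : medge :=
  match e with NoE => NoE | UE => UE | ArcTo => ArcFrom | ArcFrom => ArcTo end.

Definition mgraph (n : nat) := 'I_n -> 'I_n -> medge.

Definition is_mixed_graph n (g : mgraph n) : Prop :=
  (forall x, g x x = NoE) /\ (forall x y, g y x = rev_medge (g x y)).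

Definition omega : algC := (1 + 'i * sqrtC 3%:R) / 2%:R.

Definition medge_val (e : medge) : algC :=
  match e with NoE => 0 | UE => 1 | ArcTo => omega | ArcFrom => omega^* end.

Definition Nmat n (g : mgraph n) : 'M[algC]_n :=
  \matrix_(u, v) medge_val (g u v).

Definition T6 : seq algC := [:: 1; -1; omega; omega^*; - omega; - omega^*].

(* a partition into the six sets V_j, j in T6, given by x |-> j when x in V_j *)
Definition admissible n (g : mgraph n) (p : 'I_n -> algC) : Prop :=
  (forall x, p x \in T6) /\
  (forall x y, g x y = UE ->
     [\/ p y = p x, p y = omega * p x | p x = omega * p y]) /\
  (forall x y, g x y = ArcTo ->
     [\/ p y = p x, p y = omega^* * p x | p y = - omega * p x]).

Definition switch_edge n (g : mgraph n) (p : 'I_n -> algC) : mgraph n :=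
  fun x y =>
  match g x y with
  | NoE => NoE
  | UE => if p y == omega * p x then ArcTo
          else if p x == omega * p y then ArcFrom else UE
  | ArcTo => if p y == omega^* * p x then UE
             else if p y == - omega * p x then ArcFrom else ArcTo
  | ArcFrom => if p x == omega^* * p y then UE
               else if p x == - omega * p y then ArcTo else ArcFrom
  end.

Definition converse n (g : mgraph n) : mgraph n := fun x y => rev_medge (g x y).

Definition switch_step n (g h : mgraph n) : Prop :=
  (exists p, admissible g p /\ forall x y, h x y = switch_edge g p x y)
  \/ (forall x y, h x y = converse g x y).

Definition switching_equiv n (g h : mgraph n) : Prop :=
  clos_refl_trans (mgraph n) (@switch_step n) g h \/
  clos_refl_trans (mgraph n) (@switch_step n) h g.

Definition Kbip n (A B : {set 'I_n}) : mgraph n :=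
  fun x y => if ((x \in A) && (y \in B)) || ((x \in B) && (y \in A)) then UE else NoE.

From HB Require Import structures.
From mathcomp Require Import all_boot all_order all_algebra all_field.
From mathcomp Require Import ring.
From Stdlib Require Import Relations.
Import Order.TTheory GRing.Theory Num.Theory.
Local Open Scope ring_scope.

(* All 3x3 minors of N = N(M_G) vanish.  Fix an edge uv; as N_uv N_vu = 1, the
   minor on rows u, v, w and columns u, v, x writes N_wx through the columns u
   and v.  For w = x it shows that no vertex is adjacent to both u and v (a
   sixth root of unity z never has z + z^* = 0); hence N lives on the pairs
   between the neighbourhoods A of v and B of u, where N_xy = p_x p_y^* with
   p_x in T6.  Switching along the partition given by p makes every edge
   undirected, which leaves K_{a,b} together with isolated vertices. *)

Lemma conj_omega : omega^* = 1 - omega.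
Proof.
have sqrt3_ge0 : 0 <= sqrtC (3%:R : algC) by rewrite sqrtC_ge0 ler0n.
rewrite /omega rmorphM rmorphD /= rmorph1 rmorphM /= conjCi.
by rewrite (geC0_conj sqrt3_ge0) fmorphV /= conjC_nat; field.
Qed.

Lemma omega_sqr : omega ^+ 2 = omega - 1.
Proof.
have sqrt3_sqr : sqrtC (3%:R : algC) ^+ 2 = 3%:R by rewrite sqrtCK.
apply/eqP; rewrite -subr_eq0; apply/eqP.
have -> : omega ^+ 2 - (omega - 1) = (3%:R + 'i ^+ 2 * sqrtC 3%:R ^+ 2) / 4%:R.
  by rewrite /omega; field.
by rewrite sqrCi sqrt3_sqr mulN1r subrr mul0r.
Qed.

Lemma omega_mul_conj : omega * omega^* = 1.
Proof. by rewrite conj_omega mulrBr mulr1 -expr2 omega_sqr opprB addrCA subrr addr0. Qed.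

Lemma omega_neq1 : omega != 1.
Proof.
apply/eqP => omega1; move: omega_sqr.
by rewrite omega1 expr1n subrr => /eqP; rewrite oner_eq0.
Qed.

Lemma omegaX3 : omega ^+ 3 = -1.
Proof. by rewrite exprS omega_sqr mulrBr -expr2 omega_sqr mulr1; ring. Qed.

Lemma T6_omegaX : T6 =i [seq omega ^+ k | k <- iota 0 6].
Proof.
have omegaX2 : omega ^+ 2 = - omega^* by rewrite omega_sqr conj_omega opprB.
have omegaX4 : omega ^+ 4 = - omega by rewrite exprSr omegaX3 mulN1r.
have omegaX5 : omega ^+ 5 = omega^*.
  by rewrite exprSr omegaX4 mulNr -expr2 omegaX2 opprK.
move=> x; rewrite /= expr0 expr1 omegaX2 omegaX3 omegaX4 omegaX5 !inE.
by apply/idP/idP => /or4P[| | |/or3P[| |]] /eqP->; rewrite eqxx ?orbT.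
Qed.

Lemma omegaX6 : omega ^+ 6 = 1.
Proof. by rewrite (exprM omega 3 2) omegaX3 sqrrN expr1n. Qed.

Lemma T6P x : reflect (exists k, x = omega ^+ k) (x \in T6).
Proof.
rewrite T6_omegaX; apply: (iffP mapP) => [[k _ ->] | [k ->]]; first by exists k.
by exists (k %% 6)%N; rewrite ?expr_mod ?omegaX6 // mem_iota ltn_pmod.
Qed.

Lemma T6M x y : x \in T6 -> y \in T6 -> x * y \in T6.
Proof. by move=> /T6P[i ->] /T6P[j ->]; apply/T6P; exists (i + j)%N; rewrite exprD. Qed.

Lemma T6_mul_conj x : x \in T6 -> x * x^* = 1.
Proof. by move=> /T6P[k ->]; rewrite rmorphXn -exprMn omega_mul_conj expr1n. Qed.

Lemma T6_neq0 x : x \in T6 -> x != 0.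
Proof.
move=> /T6_mul_conj xx1; apply/eqP => x0.
by move: xx1; rewrite x0 mul0r => /eqP; rewrite eq_sym oner_eq0.
Qed.

Lemma omega_neq0 : omega != 0.
Proof. by apply: T6_neq0; rewrite !inE eqxx !orbT. Qed.

Lemma T6_expr6 x : x \in T6 -> x ^+ 6 = 1.
Proof. by move=> /T6P[k ->]; rewrite exprAC omegaX6 expr1n. Qed.

Lemma T6_add_conj_neq0 x : x \in T6 -> x + x^* != 0.
Proof.
move=> x_T6; apply/eqP => /(canRL (addKr x)); rewrite addr0 => conjx.
have x_sqr : x ^+ 2 = -1 by rewrite -[LHS]opprK expr2 -mulrN -conjx T6_mul_conj.
have /T6_expr6 := x_T6; rewrite (exprM x 2 3) x_sqr -signr_odd /= expr1.
by move/eqP; rewrite eq_sym -subr_eq0 opprK -(natrD _ 1 1) pnatr_eq0.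
Qed.

Lemma Nmat_T6 {n} (g : mgraph n) x y : Nmat g x y != 0 -> Nmat g x y \in T6.
Proof.
by rewrite mxE; case: (g x y) => /=; rewrite ?eqxx // => _; rewrite !inE eqxx ?orbT.
Qed.

Lemma Nmat_diag {n} {g : mgraph n} : is_mixed_graph g -> forall x, Nmat g x x = 0.
Proof. by case=> g_diag _ x; rewrite mxE g_diag. Qed.

Lemma Nmat_herm {n} {g : mgraph n} :
  is_mixed_graph g -> forall x y, Nmat g y x = (Nmat g x y)^*.
Proof.
case=> _ g_rev x y; rewrite !mxE g_rev.
by case: (g x y) => /=; rewrite ?rmorph0 ?rmorph1 ?conjCK.
Qed.

Lemma mxrank_mxsub (F : fieldType) m n m' n' (f : 'I_m' -> 'I_m)
  (g : 'I_n' -> 'I_n) (A : 'M[F]_(m, n)) : (\rank (mxsub f g A) <= \rank A)%N.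
Proof.
have -> : mxsub f g A = rowsub f 1%:M *m (A *m colsub g 1%:M).
  by rewrite mulmx_colsub mulmx1 -mxsub_mul mul1mx.
exact: leq_trans (mxrankM_maxr _ _) (mxrankM_maxl _ _).
Qed.

Lemma det_mxsub_eq0 (F : fieldType) m n k (f : 'I_k -> 'I_m) (g : 'I_k -> 'I_n)
  (A : 'M[F]_(m, n)) : (\rank A < k)%N -> \det (mxsub f g A) = 0.
Proof.
move=> rankA; apply/eqP; apply: contraTT rankA => det_neq0.
have /mxrank_unit <- : mxsub f g A \in unitmx by rewrite unitmxE unitfE.
by rewrite -leqNgt mxrank_mxsub.
Qed.

Lemma det_mx33 (R : comNzRingType) (f : nat -> nat -> R) :
  \det (\matrix_(i < 3, j < 3) f i j) = f 0 0 * (f 1 1 * f 2 2 - f 1 2 * f 2 1)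
         - f 0 1 * (f 1 0 * f 2 2 - f 1 2 * f 2 0)
         + f 0 2 * (f 1 0 * f 2 1 - f 1 1 * f 2 0).
Proof.
rewrite (expand_det_row _ 0) !big_ord_recr big_ord0 /= add0r.
rewrite /cofactor !(expand_det_row _ 0) !big_ord_recr big_ord0 /= !add0r.
by rewrite /cofactor !det_mx11 !mxE /= !big_ord0 !add0r /bump /=; ring.
Qed.

Section FactorSwitching.

Context {n : nat} {g : mgraph n} {p : 'I_n -> algC}.
Hypothesis p_T6 : forall x, p x \in T6.
Hypothesis Nmat_factor : forall x y, Nmat g x y != 0 -> Nmat g x y = p x * (p y)^*.

Lemma edge_val_factor x y :
  medge_val (g x y) != 0 -> p x = medge_val (g x y) * p y.
Proof.
have := Nmat_factor x y; rewrite mxE => factor /factor->.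
by rewrite -mulrA (mulrC _ (p y)) T6_mul_conj ?mulr1.
Qed.

Lemma factor_admissible : admissible g p.
Proof.
split=> //; split=> x y gxy; have := edge_val_factor x y; rewrite gxy /=.
  by rewrite oner_neq0 mul1r => /(_ isT) ->; apply: Or31.
move=> /(_ omega_neq0) ->; apply: Or32.
by rewrite mulrA (mulrC _ omega) omega_mul_conj mul1r.
Qed.

Lemma switch_edge_factor x y :
  switch_edge g p x y = if medge_val (g x y) != 0 then UE else NoE.
Proof.
have omega_mul_neq z : z != 0 -> (z == omega * z) = false.
  move=> z_neq0; apply/negbTE; rewrite -subr_eq0 -{1}[z]mul1r -mulrBl.
  by rewrite mulf_neq0 // subr_eq0 eq_sym omega_neq1.
rewrite /switch_edge; case gxy: (g x y); rewrite /= ?eqxx //.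
all: have := edge_val_factor x y; rewrite gxy /= ?oner_neq0 ?conjC_eq0 ?omega_neq0.
all: move=> /(_ isT) ->.
- by rewrite mul1r omega_mul_neq ?T6_neq0.
- by rewrite mulrA (mulrC _ omega) omega_mul_conj mul1r eqxx.
- by rewrite eqxx.
Qed.

Lemma factor_switch_step (h : mgraph n) :
  (forall x y, h x y = if Nmat g x y != 0 then UE else NoE) -> switch_step g h.
Proof.
move=> hE; left; exists p; split; first exact: factor_admissible.
by move=> x y; rewrite hE switch_edge_factor mxE.
Qed.

End FactorSwitching.

Definition nbr {n} (N : 'M[algC]_n) (v : 'I_n) : {set 'I_n} := [set w | N w v != 0].

Definition switching_fun {n} (N : 'M[algC]_n) (u v w : 'I_n) : algC :=
  if w \in nbr N v then N w v else if w \in nbr N u then N u v * N w u else 1.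

Section RankTwoT6Matrix.

Context {n : nat} {N : 'M[algC]_n}.
Hypothesis N_diag : forall x, N x x = 0.
Hypothesis N_herm : forall x y, N y x = (N x y)^*.
Hypothesis N_T6 : forall x y, N x y != 0 -> N x y \in T6.
Hypothesis N_rank : (\rank N <= 2)%N.

Context {u v : 'I_n}.
Hypothesis Nuv : N u v != 0.

Lemma Nuv_unit : N u v * N v u = 1.
Proof. by rewrite (N_herm u v) T6_mul_conj ?N_T6. Qed.

Lemma rank2_minor_id w x :
  N w x = N u v * N v x * N w u + N v u * N u x * N w v.
Proof.
pose r i : 'I_n := if i == 0%N then u else if i == 1%N then v else w.
pose c j : 'I_n := if j == 0%N then u else if j == 1%N then v else x.
have := @det_mxsub_eq0 _ _ _ 3 (fun i => r i) (fun j => c j) N N_rank.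
rewrite (@det_mx33 _ (fun i j => N (r i) (c j))) /r /c /= !N_diag => minor0.
rewrite -[LHS]mul1r -Nuv_unit; apply/eqP; rewrite -subr_eq0 -oppr_eq0 -minor0.
by apply/eqP; ring.
Qed.

Lemma no_common_nbr w : (N w u == 0) || (N w v == 0).
Proof.
apply: contraT; rewrite negb_or => /andP[Nwu Nwv].
have Nvw : N v w != 0 by rewrite N_herm conjC_eq0.
have triangle_T6 : N u v * N v w * N w u \in T6 by rewrite !T6M ?N_T6.
have /T6_add_conj_neq0 := triangle_T6; rewrite !rmorphM /= -!N_herm.
by rewrite -(mulrA (N v u)) (mulrC (N w v)) mulrA -rank2_minor_id N_diag eqxx.
Qed.

Lemma disjoint_nbr : [disjoint nbr N v & nbr N u].
Proof.
by rewrite -setI_eq0; apply/eqP/setP => w; rewrite !inE andbC -negb_or no_common_nbr.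
Qed.

Lemma switching_fun_T6 w : switching_fun N u v w \in T6.
Proof.
rewrite /switching_fun /nbr !in_set; case: ifP => [/N_T6 // | _].
case: ifP => [Nwu | _]; first by rewrite T6M ?N_T6.
by rewrite !inE eqxx.
Qed.

Lemma rank2_bipartite_factor x y :
  N x y = if (x \in nbr N v) && (y \in nbr N u) || (x \in nbr N u) && (y \in nbr N v)
          then switching_fun N u v x * (switching_fun N u v y)^* else 0.
Proof.
rewrite (rank2_minor_id x y) /switching_fun /nbr !in_set.
rewrite (N_herm u v) (N_herm y u) (N_herm y v).
move: (no_common_nbr x) (no_common_nbr y).
have [->|xu] := eqVneq (N x u) 0; have [->|xv] := eqVneq (N x v) 0;
have [->|yu] := eqVneq (N y u) 0; have [->|yv] := eqVneq (N y v) 0;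
by rewrite ?eqxx //= ?rmorphM => _ _; ring.
Qed.

Lemma rank2_neq0 x y :
  (N x y != 0) = (x \in nbr N v) && (y \in nbr N u) || (x \in nbr N u) && (y \in nbr N v).
Proof.
rewrite rank2_bipartite_factor; case: ifP => _; rewrite ?eqxx //.
by rewrite mulf_neq0 ?conjC_eq0 ?T6_neq0 ?switching_fun_T6.
Qed.

Lemma rank2_factor x y :
  N x y != 0 -> N x y = switching_fun N u v x * (switching_fun N u v y)^*.
Proof. by move=> Nxy; rewrite [LHS]rank2_bipartite_factor -rank2_neq0 Nxy. Qed.

End RankTwoT6Matrix.

Theorem theorem5p9 (n : nat) (g : mgraph n) :
  is_mixed_graph g -> \rank (Nmat g) = 2%N ->
  exists (a b t : nat) (A B : {set 'I_n}),
    [/\ (1 <= a)%N, (1 <= b)%N & (a + b + t)%N = n] /\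
    [/\ #|A| = a, #|B| = b & [disjoint A & B]] /\
    switching_equiv g (Kbip A B).
Proof.
move=> g_mixed rankN; set N := Nmat g in rankN *.
have N_diag := Nmat_diag g_mixed; have N_herm := Nmat_herm g_mixed.
have N_rank : (\rank N <= 2)%N by rewrite rankN.
have /matrix0Pn[u [v Nuv]] : N != 0 by rewrite -mxrank_eq0 rankN.
have N_nbr := rank2_neq0 N_diag N_herm (Nmat_T6 g) N_rank Nuv.
have N_factor := rank2_factor N_diag N_herm (Nmat_T6 g) N_rank Nuv.
have AB_disj := disjoint_nbr N_diag N_herm (Nmat_T6 g) N_rank Nuv.
exists #|nbr N v|, #|nbr N u|, (n - (#|nbr N v| + #|nbr N u|))%N, (nbr N v), (nbr N u).
split; [split | split => //].
- by apply/card_gt0P; exists u; rewrite inE.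
- by apply/card_gt0P; exists v; rewrite inE N_herm conjC_eq0.
- rewrite subnKC // -cardsUI disjoint_setI0 // cards0 addn0.
  by rewrite -[n in (_ <= n)%N]card_ord max_card.
left; apply/rt_step/(factor_switch_step (switching_fun_T6 (Nmat_T6 g) Nuv) N_factor).
by move=> x y; rewrite /Kbip -N_nbr.
Qed.
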